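(* Let $M$ be a real symmetric $n\times n$ matrix with exactly one positive eigenvalue and $n-1$ negative eigenvalues (and no zero eigenvalue), and write $\det(xI-M)=\sum_{k=0}^n a_kx^k$. (1) If $\mathrm{Trace}(M)=0$, then the sequence $|a_0|,|a_1|,\ldots,|a_{n-2}|$ is log-concave and unimodal. (2) If $\mathrm{Trace}(M)>0$, then the sequence $|a_0|,|a_1|,\ldots,|a_{n-1}|$ is log-concave and unimodal.
   Context: A sequence $a_0,\dots,a_m$ is unimodal if there is an index $k$ with $a_{j-1}\le a_j$ for $j\le k$ and $a_j\ge a_{j+1}$ for $j\ge k$; it is log-concave if $a_i^2\ge a_{i-1}a_{i+1}$ for $1\le i\le m-1$. *)

From HB Require Import structures.
From mathcomp Require Import all_boot all_order all_algebra.
From mathcomp Require Import reals.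
Set Implicit Arguments. Unset Strict Implicit. Unset Printing Implicit Defensive.
Import Order.TTheory GRing.Theory Num.Theory.
Local Open Scope ring_scope.

Definition unimodal (R : numDomainType) (a : nat -> R) (m : nat) : Prop :=
  exists k : nat, (k <= m)%N /\
    (forall j : nat, (1 <= j <= k)%N -> a j.-1 <= a j) /\
    (forall j : nat, (k <= j < m)%N -> a j.+1 <= a j).

Definition log_concave (R : numDomainType) (a : nat -> R) (m : nat) : Prop :=
  forall i : nat, (1 <= i <= m.-1)%N -> a i.-1 * a i.+1 <= a i ^+ 2.

Definition one_pos_rest_neg (R : realType) (n : nat) (M : 'M[R]_n) : Prop :=
  exists lam : 'I_n -> R,
    char_poly M = \prod_(i < n) ('X - (lam i)%:P) /\
    exists i0 : 'I_n, 0 < lam i0 /\ forall i : 'I_n, i != i0 -> lam i < 0.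

From HB Require Import structures.
From mathcomp Require Import all_boot all_order all_algebra.
From mathcomp Require Import reals.
From mathcomp.real_closed Require Import polyorder polyrcf.
From mathcomp Require Import zify ring.
Import Order.TTheory GRing.Theory Num.Theory.
Local Open Scope ring_scope.

(* Write char_poly M = (X - l) Q with l > 0, where Q has only negative roots
   and hence positive coefficients.  Differentiation preserves real-rootedness
   (Rolle), and Laguerre's inequality p'^2 - p p'' >= 0 for real-rooted p,
   applied to the j-th derivative at 0, gives Newton's inequality
   (j+2) q_j q_(j+2) <= (j+1) q_(j+1)^2.  So the coefficients a_k of
   char_poly M are log-concave and those of Q strictly so.  Since
   a_k = Q_(k-1) - l Q_k, strict log-concavity of Q carries a_(k+1) <= 0 down
   to a_k < 0; as a_(n-1) = - Tr M, the a_k are negative up to n-2 when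
   Tr M >= 0, and up to n-1 when Tr M > 0.  Finally a positive log-concave
   sequence is unimodal. *)

Local Notation "\prod_XsubC s" := (\prod_(x <- s) ('X - x%:P))
  (at level 36, s at level 0).

Section IdomainProdXsubC.
Context {R : idomainType}.

Lemma dvdp_prod_XsubC_deriv (u v : seq R) : {subset u <= v} ->
  \prod_XsubC u %| (\prod_XsubC u)^`() * \prod_XsubC v.
Proof.
elim: u => [|y u IHu] sub_uv; first by rewrite big_nil dvd1p.
have sub_u : {subset u <= v} by move=> x ux; apply: sub_uv; rewrite inE ux orbT.
have y_root : root (\prod_XsubC v) y by rewrite root_prod_XsubC sub_uv ?mem_head.
rewrite big_cons derivM derivXsubC mul1r [_ * \prod_XsubC v]mulrDl.
apply: dvdp_add.
  by rewrite mulrC dvdp_mul // dvdp_XsubCl.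
by rewrite -mulrA dvdp_mul // IHu.
Qed.

End IdomainProdXsubC.

Section RealDomain.
Context {R : realDomainType}.
Implicit Types (q : {poly R}) (s : seq R).

Definition real_rooted q := exists c s, q = c *: \prod_XsubC s.

Lemma coef_prod_XsubC_ge0 s k : all (fun x => x < 0) s -> 0 <= (\prod_XsubC s)`_k.
Proof.
elim: s k => [|a s IHs] k /=; first by rewrite big_nil coef1; case: k.
move=> /andP[a_lt0 s_lt0]; rewrite big_cons mulrBl coefB coefXM coefCM -mulNr.
have Na_ge0 : 0 <= - a by rewrite oppr_ge0 ltW.
by case: k => [|k]; rewrite addr_ge0 ?mulr_ge0 ?IHs.
Qed.

Lemma coef_prod_XsubC_gt0 s k : all (fun x => x < 0) s -> (k <= size s)%N ->
  0 < (\prod_XsubC s)`_k.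
Proof.
elim: s k => [|a s IHs] k /=; first by rewrite big_nil coef1 leqn0 => _ /eqP ->.
move=> /andP[a_lt0 s_lt0] le_k_s; rewrite big_cons mulrBl coefB coefXM coefCM -mulNr.
have Na_gt0 : 0 < - a by rewrite oppr_gt0.
case: k le_k_s => [|k] /= le_k_s; first by rewrite add0r mulr_gt0 ?IHs.
apply: lt_le_trans (IHs k s_lt0 le_k_s) _.
by rewrite lerDl mulr_ge0 ?coef_prod_XsubC_ge0 ?ltW.
Qed.

Definition laguerre q x := q^`().[x] ^+ 2 - q.[x] * q^`()^`().[x].

Lemma laguerre_XsubC_mul a q x :
  laguerre (('X - a%:P) * q) x = q.[x] ^+ 2 + (x - a) ^+ 2 * laguerre q x.
Proof.
rewrite /laguerre derivM derivXsubC mul1r derivD derivM derivXsubC mul1r !hornerE.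
set g0 := q.[x]; set g1 := q^`().[x]; set g2 := q^`()^`().[x].
change ((g0 + (x - a) * g1) ^+ 2 - (x - a) * g0 * (g1 + g1 + (x - a) * g2)
  = g0 ^+ 2 + (x - a) ^+ 2 * (g1 ^+ 2 - g0 * g2)); ring.
Qed.

Lemma laguerre_prod_XsubC_ge0 s x : 0 <= laguerre (\prod_XsubC s) x.
Proof.
elim: s => [|a s IHs]; last first.
  by rewrite big_cons laguerre_XsubC_mul addr_ge0 ?sqr_ge0 // mulr_ge0 ?sqr_ge0.
by rewrite big_nil /laguerre -polyC1 !derivC !horner0 mulr0 expr0n subrr.
Qed.

Lemma real_rooted_laguerre_ge0 q x : real_rooted q -> 0 <= laguerre q x.
Proof.
case=> c [s ->]; have -> : laguerre (c *: \prod_XsubC s) x =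
    c ^+ 2 * laguerre (\prod_XsubC s) x.
  rewrite /laguerre !derivZ !hornerZ; set p := \prod_XsubC s; ring.
by rewrite mulr_ge0 ?sqr_ge0 ?laguerre_prod_XsubC_ge0.
Qed.

(* The bound [m.-1] covers [k = 0] even when [m = 0]. *)
Lemma coef_XsubC_mul_lt0 c q m : 0 < c -> (forall k, (k <= m)%N -> 0 < q`_k) ->
    (forall j, 0 < q`_j * q`_j.+2 -> q`_j * q`_j.+2 < q`_j.+1 ^+ 2) ->
    (('X - c%:P) * q)`_m <= 0 ->
  forall k, (k <= m.-1)%N -> (('X - c%:P) * q)`_k < 0.
Proof.
move=> c_gt0 q_gt0 q_lc; set F := _ * q => Fm_le0.
have coefF k : F`_k = (if k == 0%N then 0 else q`_k.-1) - c * q`_k.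
  by rewrite /F mulrBl coefB coefXM coefCM.
have F0_lt0 : F`_0 < 0 by rewrite coefF sub0r oppr_lt0 mulr_gt0 ?q_gt0.
have step k : (k < m)%N -> F`_k.+1 <= 0 -> F`_k < 0.
  case: k => [_ _ //|k lt_km]; rewrite !coefF /= subr_le0 subr_lt0 => le_q1_cq2.
  have q0_gt0 : 0 < q`_k by rewrite q_gt0 //; lia.
  have q1_gt0 : 0 < q`_k.+1 by rewrite q_gt0 //; lia.
  have q2_gt0 : 0 < q`_k.+2 by rewrite q_gt0.
  rewrite -(ltr_pM2r q2_gt0); apply: lt_le_trans (q_lc k (mulr_gt0 _ _)) _ => //.
  by rewrite mulrAC expr2 ler_pM2r.
have F_le0 d : (d <= m)%N -> F`_(m - d) <= 0.
  elim: d => [|d IHd] le_dm; first by rewrite subn0.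
  by apply/ltW/step; rewrite ?subnSK ?IHd //; lia.
move=> [_ //|k le_k]; have lt_km : (k.+1 < m)%N by lia.
by apply: step => //; rewrite -(subKn lt_km) F_le0 ?leq_subr.
Qed.

Lemma log_concave_unimodal (b : nat -> R) m : (forall k, (k <= m)%N -> 0 < b k) ->
  log_concave b m -> unimodal b m.
Proof.
move=> b_gt0 lc_b.
have descent j : (j.+1 < m)%N -> b j.+1 <= b j -> b j.+2 <= b j.+1.
  move=> lt_jm le_b; have lc_j : b j * b j.+2 <= b j.+1 ^+ 2 by apply: (lc_b j.+1); lia.
  have bj_gt0 : 0 < b j by rewrite b_gt0 //; lia.
  rewrite -(ler_pM2l bj_gt0); apply: le_trans lc_j _.
  by rewrite expr2 mulrC ler_pM2r ?b_gt0 //; lia.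
pose stops j := (m <= j)%N || (b j.+1 <= b j).
have stops_m : exists j, stops j by exists m; rewrite /stops leqnn.
case: (ex_minnP stops_m) => k stops_k k_min.
exists k; split; first by apply: k_min; rewrite /stops leqnn.
split=> j /andP[].
  move=> j_gt0 le_jk; have: ~~ stops j.-1 by apply: contraTN le_jk => /k_min; lia.
  by rewrite negb_or -ltNge prednK // => /andP[_ /ltW].
move=> /subnKC <-; elim: (j - k)%N => [|d IHd] lt_m.
  by move: stops_k; rewrite addn0 in lt_m *; rewrite /stops leqNgt lt_m.
by rewrite addnS in lt_m *; apply: descent => //; apply: IHd; lia.
Qed.

Lemma lt0_log_concave_unimodal_norm (a : nat -> R) m :
    (forall k, (k <= m)%N -> a k < 0) -> log_concave a m ->
  log_concave (fun k => `|a k|) m /\ unimodal (fun k => `|a k|) m.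
Proof.
move=> a_lt0 lc_a.
have lc_norm : log_concave (fun k => `|a k|) m.
  move=> i i_range /=; rewrite !ltr0_norm ?a_lt0 ?mulrNN ?sqrrN ?lc_a //; lia.
split=> //; apply: log_concave_unimodal => // k le_km.
by rewrite normr_gt0 lt_eqF ?a_lt0.
Qed.

End RealDomain.

Section RealClosedField.
Context {R : rcfType}.
Implicit Types (p q : {poly R}) (s : seq R).

Lemma rolle_path p a v : path <%R a v -> all (root p) (a :: v) ->
  exists w, [/\ size w = size v, uniq w, all (root p^`()) w,
    all (fun x => a < x) w & all (fun x => x \notin a :: v) w].
Proof.
elim: v a => [|b v IHv] a; first by exists [::].
move=> /andP[lt_ab path_bv] /andP[pa root_bv]; have /andP[pb _] := root_bv.
have [w [size_w uniq_w root_w gt_w notin_w]] := IHv b path_bv root_bv.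
have pab : p.[a] = p.[b] by rewrite (rootP pa) (rootP pb).
have [c] := poly_rolle lt_ab pab.
rewrite in_itv /= => /andP[lt_ac lt_cb] root_c.
have gt_v : all (fun x => b < x) v by apply: order_path_min path_bv; exact: lt_trans.
have gt_b_neq_c x : b < x -> x != c by move=> lt_bx; rewrite gt_eqF ?(lt_trans lt_cb).
have notin_gt_b t : all (fun x => b < x) t -> c \notin t.
  by move=> gt_t; apply/negP => /(allP gt_t) /gt_b_neq_c; rewrite eqxx.
exists (c :: w); split => /=.
- by rewrite size_w.
- by rewrite uniq_w notin_gt_b.
- by rewrite root_w andbT; apply/rootP.
- by rewrite lt_ac; apply/allP => x /(allP gt_w); apply: lt_trans.
- rewrite !inE (gt_eqF lt_ac) (lt_eqF lt_cb) notin_gt_b //=.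
  apply/allP => x xw; have lt_bx := allP gt_w x xw.
  by rewrite inE negb_or (allP notin_w) // andbT gt_eqF ?(lt_trans lt_ab).
Qed.

Lemma real_rooted_deriv_prod_XsubC s : real_rooted (\prod_XsubC s)^`().
Proof.
case: s => [|x0 s0]; first by exists 0, [::]; rewrite big_nil -polyC1 derivC scale0r.
set s := x0 :: s0; set p := \prod_XsubC s; set v := undup s.
(* [u] holds the repeated roots of [p], which divide [p'] with multiplicity one
   less; Rolle supplies [size v - 1] further roots between consecutive distinct
   roots, and together they account for the whole degree of [p']. *)
have [u perm_s] := perm_to_subseq (undup_subseq s).
have sub_uv : {subset u <= v}.
  by move=> y uy; rewrite mem_undup (perm_mem perm_s) mem_cat uy orbT.
case def_v: (sort <=%R v) => [|a vs].
  by have := mem_sort <=%R v x0; rewrite def_v mem_undup mem_head.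
have [w [size_w uniq_w root_w _ notin_w]] : exists w, [/\ size w = size vs, uniq w,
    all (root p^`()) w, all (fun x => a < x) w & all (fun x => x \notin a :: vs) w].
  apply: rolle_path; first by have := sort_lt_sorted v; rewrite def_v undup_uniq.
  by apply/allP => y; rewrite -def_v mem_sort mem_undup root_prod_XsubC.
have u_dvd : \prod_XsubC u %| p^`().
  rewrite /p (perm_big _ perm_s) big_cat derivM /=; apply: dvdp_add.
    exact/dvdp_mull/dvdpp.
  by rewrite mulrC dvdp_prod_XsubC_deriv.
have w_dvd : \prod_XsubC w %| p^`() by rewrite uniq_roots_dvdp ?uniq_rootsE.
have coprime_uw : coprimep (\prod_XsubC u) (\prod_XsubC w).
  rewrite [X in coprimep _ X]big_seq.
  apply: (big_ind (coprimep _)) => [|q1 q2 co1 co2|y yw]; first exact: coprimep1.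
    by rewrite coprimepMr co1.
  rewrite coprimep_XsubC root_prod_XsubC; apply: contra (allP notin_w y yw).
  by rewrite -def_v mem_sort => /sub_uv.
have size_uw : size (\prod_XsubC u * \prod_XsubC w) = size p^`().
  rewrite -big_cat size_deriv !size_prod_XsubC size_cat size_w (perm_size perm_s).
  by rewrite size_cat -(size_sort <=%R v) def_v /= addnC.
have /eqpP[[c1 c2] /andP[c1_neq0 c2_neq0] /= eq_c] :
    \prod_XsubC u * \prod_XsubC w %= p^`().
  by rewrite -dvdp_size_eqp ?size_uw // Gauss_dvdp // u_dvd w_dvd.
exists (c1 / c2), (u ++ w).
by rewrite big_cat mulrC -scalerA eq_c scalerA mulVf // scale1r.
Qed.

Lemma real_rooted_deriv q : real_rooted q -> real_rooted q^`().
Proof.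
case=> c [s ->]; rewrite derivZ; have [c' [t ->]] := real_rooted_deriv_prod_XsubC s.
by exists (c * c'), t; rewrite scalerA.
Qed.

Lemma real_rooted_derivn q j : real_rooted q -> real_rooted q^`(j).
Proof.
move=> q_rr; elim: j => [|j IHj]; first by rewrite derivn0.
by rewrite derivnS; apply: real_rooted_deriv.
Qed.

Lemma real_rooted_newton q j : real_rooted q ->
  q`_j * q`_j.+2 * j.+2%:R <= q`_j.+1 ^+ 2 * j.+1%:R.
Proof.
move=> /(real_rooted_derivn _ j) /(real_rooted_laguerre_ge0 _ 0).
rewrite /laguerre -!derivnS !horner_coef0 !coef_derivn !addn0 !ffactnn.
rewrite -[q`_j.+1 *+ _]mulr_natr -[q`_j *+ _]mulr_natr -[q`_j.+2 *+ _]mulr_natr.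
rewrite !factS !natrM.
set f := j`!%:R; set k1 := j.+1%:R; set k2 := j.+2%:R.
have f_gt0 : 0 < f by rewrite ltr0n fact_gt0.
have -> : (q`_j.+1 * (k1 * f)) ^+ 2 - q`_j * f * (q`_j.+2 * (k2 * (k1 * f)))
  = f ^+ 2 * k1 * (q`_j.+1 ^+ 2 * k1 - q`_j * q`_j.+2 * k2) by ring.
by rewrite pmulr_rge0 ?subr_ge0 // mulr_gt0 ?exprn_gt0 // ltr0n.
Qed.

Lemma real_rooted_coef_ltr q j : real_rooted q -> 0 < q`_j * q`_j.+2 ->
  q`_j * q`_j.+2 < q`_j.+1 ^+ 2.
Proof.
move=> /(real_rooted_newton _ j) newton P_gt0; have k_gt0 : 0 < j.+1%:R :> R by [].
rewrite -(ltr_pM2r k_gt0); apply: lt_le_trans newton.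
by rewrite -(natr1 j.+1) mulrDr mulr1 ltrDl.
Qed.

Lemma real_rooted_coef_log_concave q j : real_rooted q ->
  q`_j * q`_j.+2 <= q`_j.+1 ^+ 2.
Proof.
move=> q_rr; have [P_le0 | P_gt0] := lerP (q`_j * q`_j.+2) 0.
  exact: le_trans P_le0 (sqr_ge0 _).
exact/ltW/real_rooted_coef_ltr.
Qed.

End RealClosedField.

Theorem corollary2p3 (R : realType) (n : nat) (M : 'M[R]_n) :
  M^T = M -> one_pos_rest_neg M ->
  (\tr M = 0 ->
     log_concave (fun k => `|(char_poly M)`_k|) n.-2 /\
     unimodal (fun k => `|(char_poly M)`_k|) n.-2) /\
  (0 < \tr M ->
     log_concave (fun k => `|(char_poly M)`_k|) n.-1 /\
     unimodal (fun k => `|(char_poly M)`_k|) n.-1).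
Proof.
move=> _ [lam [charM [i0 [lam_i0_gt0 lam_lt0]]]].
have n_gt0 : (0 < n)%N by apply: leq_ltn_trans (ltn_ord i0).
set F := char_poly M; set negs := [seq lam i | i <- index_enum 'I_n & i != i0].
set Q := \prod_XsubC negs.
have F_eq : F = ('X - (lam i0)%:P) * Q.
  by rewrite /F charM (bigD1 i0) //= /Q big_map big_filter.
have F_rr : real_rooted F.
  by exists 1, [seq lam i | i <- index_enum 'I_n]; rewrite scale1r big_map /F charM.
have Q_rr : real_rooted Q by exists 1, negs; rewrite scale1r.
have size_negs : size negs = n.-1.
  by rewrite size_map -[in RHS](card_ord n) -(cardC1 i0) cardE.
have Q_gt0 k : (k <= n.-1)%N -> 0 < Q`_k.
  rewrite -size_negs; apply: coef_prod_XsubC_gt0.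
  apply/allP => x /mapP[i]; rewrite mem_filter => /andP[i_neq_i0 _] ->.
  exact: lam_lt0.
have F_lt0 : 0 <= \tr M -> forall k, (k <= n.-2)%N -> F`_k < 0.
  move=> tr_ge0; rewrite F_eq; apply: coef_XsubC_mul_lt0 => //.
  - by move=> j; apply: real_rooted_coef_ltr.
  - by rewrite -F_eq char_poly_trace // oppr_le0.
have F_lc m : log_concave (fun k => F`_k) m.
  by move=> i /andP[i_gt0 _]; rewrite -(prednK i_gt0) real_rooted_coef_log_concave.
split=> [tr0 | tr_gt0]; apply: lt0_log_concave_unimodal_norm => // k le_k.
  by apply: F_lt0; rewrite ?tr0.
have [le_k' | ->] : (k <= n.-2)%N \/ k = n.-1 by lia.
  by apply: F_lt0 => //; exact: ltW.
by rewrite char_poly_trace // oppr_lt0.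
Qed.
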